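(* Let $\varepsilon>0$, $k\in\mathbb N$ with $k\ge1$, and $0<r_{\max}<\infty$. Then the mechanism $r\mapsto\mathrm{ScalarDP}(r,\varepsilon;k,r_{\max})$ (on inputs $r\ge0$) is $\varepsilon$-locally differentially private, and for $Z=\mathrm{ScalarDP}(r,\varepsilon;k,r_{\max})$ with $0\le r\le r_{\max}$ we have $\mathbb E[Z]=r$ and \[ \mathbb E[(Z-r)^2]\le \frac{k+1}{e^\varepsilon-1}\Big[r^2+\frac{r_{\max}^2}{4k^2}+\frac{(2k+1)(e^\varepsilon+k)\,r_{\max}^2}{6k(e^\varepsilon-1)}\Big]+\frac{r_{\max}^2}{4k^2}. \]
   Context: $\mathrm{ScalarDP}(r,\varepsilon;k,r_{\max})$: set $r\leftarrow\min\{r,r_{\max}\}$ and $x=kr/r_{\max}$. Sample $J=\lfloor x\rfloor$ with probability $\lceil x\rceil-x$ and $J=\lceil x\rceil$ otherwise (so $J\in\{0,\dots,k\}$). Randomized response: given $J=i$, set $\widehat J=i$ with probability $\frac{e^\varepsilon}{e^\varepsilon+k}$ and otherwise $\widehat J$ uniform on $\{0,\dots,k\}\setminus\{i\}$. Output $Z=a(\widehat J-b)$ with $a=\frac{e^\varepsilon+k}{e^\varepsilon-1}\cdot\frac{r_{\max}}k$ and $b=\frac{k(k+1)}{2(e^\varepsilon+k)}$. A mechanism $M$ is $\varepsilon$-locally differentially private if $\mathbb P(M(r)\in S)\le e^{\varepsilon}\mathbb P(M(r')\in S)$ for all inputs $r,r'$ and sets $S$. *)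

From Stdlib Require Import Reals Lra ClassicalEpsilon.
Open Scope R_scope.

Definition floorR (x : R) : R := IZR (Int_part x).
Definition ceilR (x : R) : R := - IZR (Int_part (- x)).

Definition sdp_x (k : nat) (rmax r : R) : R := INR k * Rmin r rmax / rmax.

(* Law of J on {0,...,k}: J = floor x w.p. ceil x - x, J = ceil x otherwise. *)
Definition sdp_pJ (k : nat) (rmax r : R) (i : nat) : R :=
  let x := sdp_x k rmax r in
  (if Req_EM_T (INR i) (floorR x) then ceilR x - x else 0)
  + (if Req_EM_T (INR i) (ceilR x) then 1 - (ceilR x - x) else 0).

(* Randomized response kernel: P(Jhat = j | J = i) *)
Definition sdp_rr (eps : R) (k : nat) (i j : nat) : R :=
  if Nat.eq_dec i j then exp eps / (exp eps + INR k)
  else (1 - exp eps / (exp eps + INR k)) / INR k.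

Definition sdp_pJhat (eps : R) (k : nat) (rmax r : R) (j : nat) : R :=
  sum_f_R0 (fun i => sdp_pJ k rmax r i * sdp_rr eps k i j) k.

Definition sdp_a (eps : R) (k : nat) (rmax : R) : R :=
  (exp eps + INR k) / (exp eps - 1) * (rmax / INR k).
Definition sdp_b (eps : R) (k : nat) : R :=
  INR k * (INR k + 1) / (2 * (exp eps + INR k)).

Definition sdp_out (eps : R) (k : nat) (rmax : R) (j : nat) : R :=
  sdp_a eps k rmax * (INR j - sdp_b eps k).

Definition sdp_prob (eps : R) (k : nat) (rmax r : R) (S : R -> Prop) : R :=
  sum_f_R0 (fun j => if excluded_middle_informative (S (sdp_out eps k rmax j))
                     then sdp_pJhat eps k rmax r j else 0) k.

Definition sdp_expect (eps : R) (k : nat) (rmax r : R) (f : R -> R) : R :=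
  sum_f_R0 (fun j => sdp_pJhat eps k rmax r j * f (sdp_out eps k rmax j)) k.

Definition sdp_LDP (eps : R) (k : nat) (rmax : R) : Prop :=
  forall (r r' : R) (S : R -> Prop), 0 <= r -> 0 <= r' ->
    sdp_prob eps k rmax r S <= exp eps * sdp_prob eps k rmax r' S.

From Stdlib Require Import Reals Lra Lia ZArith ClassicalEpsilon.
Open Scope R_scope.

(* Write x = k min(r, rmax) / rmax and c = (e^eps - 1) / (e^eps + k).  J rounds x stochastically
   to one of its two neighbouring integers, so E[J] = x and E[J^2] <= x^2 + 1/4.  Randomized
   response gives every output the probability 1 / (e^eps + k) plus c times the probability
   that J equals it; hence all output probabilities lie in [1, e^eps] / (e^eps + k), which is
   eps-LDP, and E[f(Jhat)] = (sum_j f j) / (e^eps + k) + c E[f(J)].  In particular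
   E[Jhat] = b + c x, so Z = a (Jhat - b) has mean a c x = r, and its second moment is
   a^2 (E[Jhat^2] - b^2 - 2 b c x) <= a^2 (k (k+1) (2k+1) / (6 (e^eps + k)) + c (x^2 + 1/4)),
   which is the stated bound plus r^2. *)

Lemma sum_f_R0_indicator (g : nat -> R) (n N : nat) : (n <= N)%nat ->
  sum_f_R0 (fun i => if Nat.eq_dec i n then g i else 0) N = g n.
Proof.
  intros hn; induction N as [|N IH].
  - assert (n = 0)%nat as -> by lia; simpl.
    destruct (Nat.eq_dec 0 0); [reflexivity | congruence].
  - rewrite tech5; destruct (Nat.eq_dec (S N) n) as [<- | ne].
    + rewrite (sum_eq _ (fun _ => 0)), sum_cte; [lra |].
      intros i hi; destruct (Nat.eq_dec i (S N)); [lia | reflexivity].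
    + rewrite IH by lia; lra.
Qed.

Lemma sum_shifted_INR (u v : R) (n : nat) :
  sum_f_R0 (fun j => u * (INR j - v)) n
  = u * (INR n * (INR n + 1) / 2 - v * (INR n + 1)).
Proof.
  induction n as [|n IH]; [simpl; field |].
  rewrite tech5, IH, S_INR; field.
Qed.

Lemma sum_shifted_INR_sq (u v : R) (n : nat) :
  sum_f_R0 (fun j => (u * (INR j - v)) ^ 2) n
  = u ^ 2 * (INR n * (INR n + 1) * (2 * INR n + 1) / 6
             - v * (INR n * (INR n + 1)) + v ^ 2 * (INR n + 1)).
Proof.
  induction n as [|n IH]; [simpl; field |].
  rewrite tech5, IH, S_INR; field.
Qed.

Lemma Req_EM_T_INR (A : Type) (i n : nat) (u v : A) :
  (if Req_EM_T (INR i) (INR n) then u else v) = (if Nat.eq_dec i n then u else v).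
Proof.
  destruct (Req_EM_T (INR i) (INR n)) as [e | e]; destruct (Nat.eq_dec i n) as [e' | e'];
    [reflexivity | apply INR_eq in e; contradiction | subst; contradiction | reflexivity].
Qed.

Definition floorN (x : R) : nat := Z.to_nat (Int_part x).
Definition ceilN (x : R) : nat := Z.to_nat (- Int_part (- x)).

Lemma floorN_spec (x : R) : 0 <= x ->
  floorR x = INR (floorN x) /\ INR (floorN x) <= x < INR (floorN x) + 1.
Proof.
  intros hx; destruct (base_Int_part x) as [h1 h2]; unfold floorR, floorN.
  assert (hz : (-1 < Int_part x)%Z) by (apply lt_IZR; lra).
  rewrite INR_IZR_INZ, Z2Nat.id by lia; lra.
Qed.

Lemma ceilN_spec (x : R) : 0 <= x ->
  ceilR x = INR (ceilN x) /\ x <= INR (ceilN x) < x + 1.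
Proof.
  intros hx; destruct (base_Int_part (- x)) as [h1 h2]; unfold ceilR, ceilN.
  assert (hz : (Int_part (- x) <= 0)%Z) by (apply le_IZR; lra).
  rewrite INR_IZR_INZ, Z2Nat.id, opp_IZR by lia; lra.
Qed.

Lemma ceilN_floorN (x : R) : 0 <= x -> ceilN x = floorN x \/ ceilN x = S (floorN x).
Proof.
  intros hx; destruct (floorN_spec x hx) as [_ hf]; destruct (ceilN_spec x hx) as [_ hc].
  assert (floorN x <= ceilN x)%nat by (apply INR_le; lra).
  assert (ceilN x < S (S (floorN x)))%nat by (apply INR_lt; rewrite !S_INR; lra).
  lia.
Qed.

Lemma ceilN_le (x : R) (K : nat) : 0 <= x <= INR K -> (ceilN x <= K)%nat.
Proof.
  intros hx; destruct (ceilN_spec x (proj1 hx)) as [_ hc].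
  assert (ceilN x < S K)%nat by (apply INR_lt; rewrite S_INR; lra).
  lia.
Qed.

Lemma rounding_mean (x m0 m1 : R) : m0 <= x <= m1 -> m1 = m0 \/ m1 = m0 + 1 ->
  (m1 - x) * m0 + (1 - (m1 - x)) * m1 = x.
Proof. intros hx [-> | ->]; [assert (x = m0) as -> by lra |]; ring. Qed.

Lemma rounding_second_moment (x m0 m1 : R) : m0 <= x <= m1 -> m1 = m0 \/ m1 = m0 + 1 ->
  (m1 - x) * m0 ^ 2 + (1 - (m1 - x)) * m1 ^ 2 <= x ^ 2 + 1 / 4.
Proof.
  intros hx [-> | ->].
  - assert (x = m0) as -> by lra; lra.
  - pose proof (pow2_ge_0 (2 * x - 2 * m0 - 1)); nra.
Qed.

Definition sdp_c (eps : R) (k : nat) : R := (exp eps - 1) / (exp eps + INR k).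

Lemma sdp_expect_square_dev (eps : R) (k : nat) (rmax r m : R) :
  sdp_expect eps k rmax r (fun z => (z - m) ^ 2)
  = sdp_expect eps k rmax r (fun z => z ^ 2) - 2 * m * sdp_expect eps k rmax r (fun z => z)
    + m ^ 2 * sdp_expect eps k rmax r (fun _ => 1).
Proof.
  unfold sdp_expect; rewrite !scal_sum, <- minus_sum, <- plus_sum.
  apply sum_eq; intros; ring.
Qed.

Section ScalarDP.

Variables (eps : R) (k : nat).
Hypotheses (heps : 0 < eps) (hk : (1 <= k)%nat).

Local Notation E := (exp eps).
Local Notation K := (INR k).

Lemma one_lt_exp_eps : 1 < E.
Proof. rewrite <- exp_0; apply exp_increasing; lra. Qed.

Lemma one_le_INR_k : 1 <= K.
Proof. apply (le_INR 1); exact hk. Qed.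

Lemma sdp_rr_eq (i j : nat) :
  sdp_rr eps k i j = 1 / (E + K) + (if Nat.eq_dec j i then sdp_c eps k else 0).
Proof.
  pose proof one_lt_exp_eps; pose proof one_le_INR_k.
  unfold sdp_rr, sdp_c; destruct (Nat.eq_dec i j); destruct (Nat.eq_dec j i);
    try lia; field; lra.
Qed.

Lemma sum_sdp_rr_row (i : nat) (F : nat -> R) : (i <= k)%nat ->
  sum_f_R0 (fun j => sdp_rr eps k i j * F j) k
  = sum_f_R0 F k / (E + K) + sdp_c eps k * F i.
Proof.
  intros hi.
  rewrite (sum_eq _ (fun j => F j * (1 / (E + K))
                              + (if Nat.eq_dec j i then sdp_c eps k * F j else 0))).
  - rewrite plus_sum, <- scal_sum, (sum_f_R0_indicator (fun j => sdp_c eps k * F j)) by exact hi.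
    unfold Rdiv; ring.
  - intros j _; rewrite sdp_rr_eq; destruct (Nat.eq_dec j i); ring.
Qed.

Section Input.

Variables (rmax r : R).
Hypotheses (hrmax : 0 < rmax) (hr : 0 <= r).

Local Notation x := (sdp_x k rmax r).
Local Notation n0 := (floorN x).
Local Notation n1 := (ceilN x).
Local Notation p0 := (INR n1 - x).

Lemma sdp_x_range : 0 <= x <= K.
Proof.
  pose proof one_le_INR_k.
  assert (hm : 0 <= Rmin r rmax <= rmax) by (split; [apply Rmin_glb | apply Rmin_r]; lra).
  assert (x * rmax = K * Rmin r rmax) by (unfold sdp_x; field; lra).
  split; nra.
Qed.

Lemma sdp_rounding_le : (n0 <= n1 <= k)%nat.
Proof.
  split; [destruct (ceilN_floorN x (proj1 sdp_x_range)); lia | exact (ceilN_le x k sdp_x_range)].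
Qed.

Lemma sdp_rounding_neighbours :
  INR n0 <= x <= INR n1 /\ (INR n1 = INR n0 \/ INR n1 = INR n0 + 1).
Proof.
  pose proof sdp_x_range as hx.
  destruct (floorN_spec x) as [_ hf]; [lra |]; destruct (ceilN_spec x) as [_ hc]; [lra |].
  split; [lra |].
  destruct (ceilN_floorN x (proj1 hx)) as [-> | ->]; [left | right; apply S_INR]; reflexivity.
Qed.

Lemma sdp_rounding_mean : p0 * INR n0 + (1 - p0) * INR n1 = x.
Proof. apply rounding_mean; apply sdp_rounding_neighbours. Qed.

Lemma sdp_rounding_second_moment : p0 * INR n0 ^ 2 + (1 - p0) * INR n1 ^ 2 <= x ^ 2 + 1 / 4.
Proof. apply rounding_second_moment; apply sdp_rounding_neighbours. Qed.

Lemma sdp_pJ_eq (i : nat) :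
  sdp_pJ k rmax r i = (if Nat.eq_dec i n0 then p0 else 0) + (if Nat.eq_dec i n1 then 1 - p0 else 0).
Proof.
  pose proof sdp_x_range.
  destruct (floorN_spec x) as [hf _]; [lra |]; destruct (ceilN_spec x) as [hc _]; [lra |].
  unfold sdp_pJ; cbv zeta; rewrite hf, hc, !Req_EM_T_INR; reflexivity.
Qed.

Lemma sdp_pJhat_eq (j : nat) :
  sdp_pJhat eps k rmax r j = p0 * sdp_rr eps k n0 j + (1 - p0) * sdp_rr eps k n1 j.
Proof.
  destruct sdp_rounding_le as [h01 h1k]; unfold sdp_pJhat.
  rewrite (sum_eq _ (fun i => (if Nat.eq_dec i n0 then p0 * sdp_rr eps k i j else 0)
                              + (if Nat.eq_dec i n1 then (1 - p0) * sdp_rr eps k i j else 0))).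
  - rewrite plus_sum, (sum_f_R0_indicator (fun i => p0 * sdp_rr eps k i j)),
      (sum_f_R0_indicator (fun i => (1 - p0) * sdp_rr eps k i j)) by lia.
    reflexivity.
  - intros i _; rewrite sdp_pJ_eq; destruct (Nat.eq_dec i n0); destruct (Nat.eq_dec i n1); ring.
Qed.

Lemma sdp_pJhat_bounds (j : nat) :
  1 / (E + K) <= sdp_pJhat eps k rmax r j <= E / (E + K).
Proof.
  pose proof one_lt_exp_eps; pose proof one_le_INR_k; pose proof sdp_x_range.
  destruct (ceilN_spec x) as [_ hc]; [lra |].
  assert (hlo : 0 < 1 / (E + K)) by (apply Rdiv_lt_0_compat; lra).
  assert (hc0 : 0 <= sdp_c eps k)
    by (unfold sdp_c; apply Rlt_le, Rdiv_lt_0_compat; lra).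
  assert (hhi : E / (E + K) = 1 / (E + K) + sdp_c eps k) by (unfold sdp_c; field; lra).
  rewrite hhi, sdp_pJhat_eq, !sdp_rr_eq.
  destruct (Nat.eq_dec j n0); destruct (Nat.eq_dec j n1); split; nra.
Qed.

Lemma sdp_expect_eq (f : R -> R) :
  sdp_expect eps k rmax r f
  = sum_f_R0 (fun j => f (sdp_out eps k rmax j)) k / (E + K)
    + sdp_c eps k * (p0 * f (sdp_out eps k rmax n0) + (1 - p0) * f (sdp_out eps k rmax n1)).
Proof.
  pose proof one_lt_exp_eps; pose proof one_le_INR_k.
  destruct sdp_rounding_le as [h01 h1k]; unfold sdp_expect.
  rewrite (sum_eq _ (fun j => sdp_rr eps k n0 j * f (sdp_out eps k rmax j) * p0
                              + sdp_rr eps k n1 j * f (sdp_out eps k rmax j) * (1 - p0))).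
  - rewrite plus_sum, <- !scal_sum, !sum_sdp_rr_row by lia.
    field; lra.
  - intros j _; rewrite sdp_pJhat_eq; ring.
Qed.

Lemma sdp_expect_mass : sdp_expect eps k rmax r (fun _ => 1) = 1.
Proof.
  pose proof one_lt_exp_eps; pose proof one_le_INR_k.
  rewrite sdp_expect_eq, sum_cte, S_INR; unfold sdp_c; field; lra.
Qed.

Lemma sdp_mean : sdp_expect eps k rmax r (fun z => z) = sdp_a eps k rmax * sdp_c eps k * x.
Proof.
  pose proof one_lt_exp_eps; pose proof one_le_INR_k.
  rewrite sdp_expect_eq; unfold sdp_out; rewrite sum_shifted_INR.
  set (a := sdp_a eps k rmax); set (b := sdp_b eps k).
  replace (p0 * (a * (INR n0 - b)) + (1 - p0) * (a * (INR n1 - b)))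
    with (a * (p0 * INR n0 + (1 - p0) * INR n1 - b)) by ring.
  rewrite sdp_rounding_mean.
  unfold b, sdp_b, sdp_c; field; lra.
Qed.

Lemma sdp_second_moment_le :
  sdp_expect eps k rmax r (fun z => z ^ 2)
  <= sdp_a eps k rmax ^ 2
     * (K * (K + 1) * (2 * K + 1) / 6 / (E + K) + sdp_c eps k * (x ^ 2 + 1 / 4)).
Proof.
  pose proof one_lt_exp_eps; pose proof one_le_INR_k; pose proof sdp_x_range as hx.
  rewrite sdp_expect_eq; unfold sdp_out; rewrite sum_shifted_INR_sq.
  set (a := sdp_a eps k rmax); set (b := sdp_b eps k); set (c := sdp_c eps k).
  set (W := p0 * INR n0 ^ 2 + (1 - p0) * INR n1 ^ 2).
  assert (hW : W <= x ^ 2 + 1 / 4) by exact sdp_rounding_second_moment.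
  assert (hb : 0 <= b) by (unfold b, sdp_b; apply Rmult_le_pos; [nra | apply Rlt_le, Rinv_0_lt_compat; lra]).
  assert (hc : 0 < c) by (unfold c, sdp_c; apply Rdiv_lt_0_compat; lra).
  replace (p0 * (a * (INR n0 - b)) ^ 2 + (1 - p0) * (a * (INR n1 - b)) ^ 2)
    with (a ^ 2 * (W - 2 * b * (p0 * INR n0 + (1 - p0) * INR n1) + b ^ 2)) by (unfold W; ring).
  rewrite sdp_rounding_mean.
  (* b is the mean of the uniform part of the law of Jhat, so the terms linear in b cancel *)
  replace (a ^ 2 * (K * (K + 1) * (2 * K + 1) / 6 - b * (K * (K + 1)) + b ^ 2 * (K + 1)) / (E + K)
           + c * (a ^ 2 * (W - 2 * b * x + b ^ 2)))
    with (a ^ 2 * (K * (K + 1) * (2 * K + 1) / 6 / (E + K) + c * W - b ^ 2 - 2 * b * c * x))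
    by (unfold b, sdp_b, c, sdp_c; field; lra).
  apply Rmult_le_compat_l; [apply pow2_ge_0 |].
  pose proof (Rmult_le_compat_l c _ _ (Rlt_le _ _ hc) hW).
  pose proof (Rmult_le_pos _ _ (Rmult_le_pos _ _ hb (Rlt_le _ _ hc)) (proj1 hx)).
  pose proof (pow2_ge_0 b); lra.
Qed.

End Input.

Lemma sdp_LDP_holds (rmax : R) : 0 < rmax -> sdp_LDP eps k rmax.
Proof.
  intros hrmax r r' S hr hr'; unfold sdp_prob.
  rewrite scal_sum; apply sum_Rle; intros j _.
  destruct (excluded_middle_informative _); [| lra].
  destruct (sdp_pJhat_bounds rmax r hrmax hr j) as [_ hhi].
  destruct (sdp_pJhat_bounds rmax r' hrmax hr' j) as [hlo _].
  pose proof (exp_pos eps).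
  assert (E / (E + K) = 1 / (E + K) * E) by (unfold Rdiv; ring).
  nra.
Qed.

Section Bounded.

Variables (rmax r : R).
Hypotheses (hrmax : 0 < rmax) (hr : 0 <= r <= rmax).

Lemma sdp_x_bounded : sdp_x k rmax r = K * r / rmax.
Proof. unfold sdp_x; rewrite Rmin_left by lra; reflexivity. Qed.

Lemma sdp_unbiased : sdp_expect eps k rmax r (fun z => z) = r.
Proof.
  pose proof one_lt_exp_eps; pose proof one_le_INR_k.
  rewrite sdp_mean, sdp_x_bounded by lra.
  unfold sdp_a, sdp_c; field; lra.
Qed.

Lemma sdp_mse_le :
  sdp_expect eps k rmax r (fun z => (z - r) ^ 2) <=
    (K + 1) / (E - 1) *
      (r ^ 2 + rmax ^ 2 / (4 * K ^ 2)
       + (2 * K + 1) * (E + K) * rmax ^ 2 / (6 * K * (E - 1)))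
    + rmax ^ 2 / (4 * K ^ 2).
Proof.
  pose proof one_lt_exp_eps; pose proof one_le_INR_k.
  rewrite sdp_expect_square_dev, sdp_unbiased, sdp_expect_mass by lra.
  pose proof (sdp_second_moment_le rmax r hrmax (proj1 hr)) as hm.
  rewrite sdp_x_bounded in hm.
  replace (sdp_a eps k rmax ^ 2 * (K * (K + 1) * (2 * K + 1) / 6 / (E + K)
             + sdp_c eps k * ((K * r / rmax) ^ 2 + 1 / 4)))
    with ((K + 1) / (E - 1) *
            (r ^ 2 + rmax ^ 2 / (4 * K ^ 2)
             + (2 * K + 1) * (E + K) * rmax ^ 2 / (6 * K * (E - 1)))
          + rmax ^ 2 / (4 * K ^ 2) + r ^ 2) in hm
    by (unfold sdp_a, sdp_c; field; lra).
  lra.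
Qed.

End Bounded.

End ScalarDP.

Theorem lemma4p9 (eps : R) (k : nat) (rmax : R)
  (heps : 0 < eps) (hk : (1 <= k)%nat) (hrmax : 0 < rmax) :
  sdp_LDP eps k rmax /\
  (forall r : R, 0 <= r <= rmax ->
     sdp_expect eps k rmax r (fun z => z) = r /\
     sdp_expect eps k rmax r (fun z => (z - r) ^ 2) <=
       (INR k + 1) / (exp eps - 1) *
         (r ^ 2 + rmax ^ 2 / (4 * INR k ^ 2)
          + (2 * INR k + 1) * (exp eps + INR k) * rmax ^ 2
            / (6 * INR k * (exp eps - 1)))
       + rmax ^ 2 / (4 * INR k ^ 2)).
Proof.
  split; [exact (sdp_LDP_holds eps k heps hk rmax hrmax) |].
  intros r hr; split.
  - exact (sdp_unbiased eps k heps hk rmax r hrmax hr).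
  - exact (sdp_mse_le eps k heps hk rmax r hrmax hr).
Qed.
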